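(* Let $\mathsf{Sup}$ be the Hilbert system described in the context. For every instance, within the flat fragment of the language of Åqvist's system $\mathbb{F}$, of the axioms $\mathbf{CL}$, $\mathbf{K_\Box}$, $\mathbf{T}$, $\mathbf{COK}$, $\mathbf{Nec}$, $\mathbf{Ext}$, $\mathbf{ID}$, $\mathbf{SH}$, $\mathbf{D^*}$ of $\mathbb{F}$, its translation $^*$ is derivable in $\mathsf{Sup}$; moreover the translations of the rules of $\mathbb{F}$ are derivable in $\mathsf{Sup}$: modus ponens, and necessitation for $\Box$, i.e. if $\varphi$ is propositional and $\vdash\varphi$ then $\vdash \neg\varphi\rightsquigarrow\bot$. (The axioms $\mathbf{5}$ and $\mathbf{Abs}$ of $\mathbb{F}$ are excluded.)
   Context: Propositional formulas: $\varphi ::= \bot \mid p \mid \varphi\land\varphi\mid\varphi\lor\varphi\mid\varphi\to\varphi\mid\varphi\leftrightarrow\varphi\mid\neg\varphi$ over a countable set of variables. The language $\mathcal{L}$: $\alpha ::= \varphi \mid \varphi\rightsquigarrow\varphi \mid B(\alpha)\mid \alpha*\alpha\mid\neg\alpha$ ($*$ a binary classical connective, $\varphi$ propositional). The system $\mathsf{Sup}$ has all classical tautologies over $\mathcal{L}$, Modus Ponens, and (with $\varphi,\psi,\chi,\varphi_i,\psi_i$ propositional, rule outputs required to lie in $\mathcal{L}$): $\mathbf{ID}$: $\varphi\rightsquigarrow\varphi$; $\mathbf{ST}$: $(\varphi\rightsquigarrow\bot)\to\neg\varphi$; $\mathbf{SH}$: $((\psi\land\chi)\rightsquigarrow\varphi)\to(\psi\rightsquigarrow(\chi\to\varphi))$;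 $\mathbf{LL+}$: $(\neg(\varphi\leftrightarrow\psi)\rightsquigarrow\bot)\to((\varphi\rightsquigarrow\chi)\leftrightarrow(\psi\rightsquigarrow\chi))$; rule $\mathbf{RCK}$: from $(\varphi_1\land\dots\land\varphi_n)\to\varphi_{n+1}$ infer $((\psi\rightsquigarrow\varphi_1)\land\dots\land(\psi\rightsquigarrow\varphi_n))\to(\psi\rightsquigarrow\varphi_{n+1})$; rule $\mathbf{S5_F}$: from $(\ell_1\land\dots\land\ell_n)\to\chi$ infer $(\ell_1\land\dots\land\ell_n)\to(\neg\chi\rightsquigarrow\bot)$, where each $\ell_j$ is $\varphi_j\rightsquigarrow\psi_j$ or $\neg(\varphi_j\rightsquigarrow\psi_j)$ and $\chi$ is propositional. Åqvist's system $\mathbb{F}$ has language with $\Box$, $\lozenge$ and dyadic $\bigcirc(\psi/\varphi)$ and axioms: $\mathbf{CL}$ (tautologies); $\mathbf{K_\Box}$: $\Box(\varphi\to\psi)\to(\Box\varphi\to\Box\psi)$; $\mathbf{T}$: $\Box\varphi\to\varphi$; $\mathbf{5}$: $\lozenge\varphi\to\Box\lozenge\varphi$; $\mathbf{COK}$: $\bigcirc(\psi\to\chi/\varphi)\to(\bigcirc(\psi/\varphi)\to\bigcirc(\chi/\varphi))$; $\mathbf{Abs}$: $\bigcirc(\varphi/\psi)\to\Box\bigcirc(\varphi/\psi)$; $\mathbf{Nec}$: $\Box\varphi\to\bigcirc(\varphi/\psi)$; $\mathbf{Ext}$: $\Box(\varphi\leftrightarrow\psi)\to(\bigcirc(\chi/\varphi)\leftrightarrow\bigcirc(\chi/\psi))$;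 $\mathbf{ID}$: $\bigcirc(\varphi/\varphi)$; $\mathbf{SH}$: $\bigcirc(\varphi/\psi\land\chi)\to\bigcirc(\chi\to\varphi/\psi)$; $\mathbf{D^*}$: $\lozenge\psi\to(\bigcirc(\varphi/\psi)\to\neg\bigcirc(\neg\varphi/\psi))$; rules: modus ponens and necessitation for $\Box$. The flat fragment consists of formulas in which $\Box,\lozenge,\bigcirc$ are applied only to propositional formulas. The translation $^*$ maps flat formulas to $\mathcal{L}$: $\varphi^*=\varphi$ for propositional $\varphi$, $(\Box\varphi)^*=\neg\varphi\rightsquigarrow\bot$, $(\lozenge\varphi)^*=\neg(\varphi\rightsquigarrow\bot)$, $(\bigcirc(\psi/\varphi))^*=\varphi\rightsquigarrow\psi$, and $^*$ commutes with the Boolean connectives. *)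

From Stdlib Require Import List Bool.
Import ListNotations.

Inductive PF : Type :=
| PBot : PF
| PVar : nat -> PF
| PAnd : PF -> PF -> PF
| POr  : PF -> PF -> PF
| PImp : PF -> PF -> PF
| PIff : PF -> PF -> PF
| PNeg : PF -> PF.

(** Propositional formulas are the L-formulas built from
    LBot, LVar and the classical connectives only (see [emb]); the classical
    connectives are shared by propositional and non-propositional formulas. *)
Inductive LF : Type :=
| LBot  : LF
| LVar  : nat -> LF
| LCond : PF -> PF -> LF
| LB    : LF -> LF
| LAnd  : LF -> LF -> LF
| LOr   : LF -> LF -> LF
| LImp  : LF -> LF -> LF
| LIff  : LF -> LF -> LF
| LNeg  : LF -> LF.

Fixpoint emb (p : PF) : LF :=
  match p with
  | PBot => LBot
  | PVar n => LVar n
  | PAnd a b => LAnd (emb a) (emb b)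
  | POr a b => LOr (emb a) (emb b)
  | PImp a b => LImp (emb a) (emb b)
  | PIff a b => LIff (emb a) (emb b)
  | PNeg a => LNeg (emb a)
  end.

Fixpoint Leval (v : nat -> bool) (c : PF -> PF -> bool) (bv : LF -> bool)
  (a : LF) : bool :=
  match a with
  | LBot => false
  | LVar n => v n
  | LCond p q => c p q
  | LB x => bv x
  | LAnd x y => Leval v c bv x && Leval v c bv y
  | LOr x y => Leval v c bv x || Leval v c bv y
  | LImp x y => implb (Leval v c bv x) (Leval v c bv y)
  | LIff x y => eqb (Leval v c bv x) (Leval v c bv y)
  | LNeg x => negb (Leval v c bv x)
  end.

Definition LTaut (a : LF) : Prop := forall v c bv, Leval v c bv a = true.

Fixpoint conjP (x : PF) (xs : list PF) : PF :=
  match xs with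
  | [] => x
  | y :: ys => PAnd x (conjP y ys)
  end.

Fixpoint conjL (x : LF) (xs : list LF) : LF :=
  match xs with
  | [] => x
  | y :: ys => LAnd x (conjL y ys)
  end.

Definition lit : Type := (bool * PF * PF)%type.
Definition litL (l : lit) : LF :=
  match l with
  | (true, p, q) => LCond p q
  | (false, p, q) => LNeg (LCond p q)
  end.

Inductive Sup : LF -> Prop :=
| Sup_taut : forall a, LTaut a -> Sup a
| Sup_mp : forall a b, Sup a -> Sup (LImp a b) -> Sup b
| Sup_ID : forall p, Sup (LCond p p)
| Sup_ST : forall p, Sup (LImp (LCond p PBot) (LNeg (emb p)))
| Sup_SH : forall p q r,
    Sup (LImp (LCond (PAnd q r) p) (LCond q (PImp r p)))
| Sup_LLplus : forall p q r,
    Sup (LImp (LCond (PNeg (PIff p q)) PBot)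
              (LIff (LCond p r) (LCond q r)))
| Sup_RCK : forall (q p1 : PF) (ps : list PF) (p' : PF),
    Sup (emb (PImp (conjP p1 ps) p')) ->
    Sup (LImp (conjL (LCond q p1) (map (LCond q) ps)) (LCond q p'))
| Sup_S5F : forall (l1 : lit) (ls : list lit) (x : PF),
    Sup (LImp (conjL (litL l1) (map litL ls)) (emb x)) ->
    Sup (LImp (conjL (litL l1) (map litL ls)) (LCond (PNeg x) PBot)).

(** The flat fragment of the language of F: Box, Dia and the dyadic
    obligation O(psi/phi) (written FObl psi phi) applied to propositional
    formulas only. *)
Inductive FF : Type :=
| FBot : FF
| FVar : nat -> FF
| FBox : PF -> FF
| FDia : PF -> FF
| FObl : PF -> PF -> FF
| FAnd : FF -> FF -> FF
| FOr  : FF -> FF -> FF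
| FImp : FF -> FF -> FF
| FIff : FF -> FF -> FF
| FNeg : FF -> FF.

Fixpoint embF (p : PF) : FF :=
  match p with
  | PBot => FBot
  | PVar n => FVar n
  | PAnd a b => FAnd (embF a) (embF b)
  | POr a b => FOr (embF a) (embF b)
  | PImp a b => FImp (embF a) (embF b)
  | PIff a b => FIff (embF a) (embF b)
  | PNeg a => FNeg (embF a)
  end.

Fixpoint Feval (v : nat -> bool) (bx dm : PF -> bool) (o : PF -> PF -> bool)
  (a : FF) : bool :=
  match a with
  | FBot => false
  | FVar n => v n
  | FBox p => bx p
  | FDia p => dm p
  | FObl q p => o q p
  | FAnd x y => Feval v bx dm o x && Feval v bx dm o y
  | FOr x y => Feval v bx dm o x || Feval v bx dm o y
  | FImp x y => implb (Feval v bx dm o x) (Feval v bx dm o y)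
  | FIff x y => eqb (Feval v bx dm o x) (Feval v bx dm o y)
  | FNeg x => negb (Feval v bx dm o x)
  end.

Definition FTaut (a : FF) : Prop := forall v bx dm o, Feval v bx dm o a = true.

Inductive FAxiom : FF -> Prop :=
| FA_CL : forall a, FTaut a -> FAxiom a
| FA_K : forall p q,
    FAxiom (FImp (FBox (PImp p q)) (FImp (FBox p) (FBox q)))
| FA_T : forall p, FAxiom (FImp (FBox p) (embF p))
| FA_COK : forall p q r,
    FAxiom (FImp (FObl (PImp q r) p) (FImp (FObl q p) (FObl r p)))
| FA_Nec : forall p q, FAxiom (FImp (FBox p) (FObl p q))
| FA_Ext : forall p q r,
    FAxiom (FImp (FBox (PIff p q)) (FIff (FObl r p) (FObl r q)))
| FA_ID : forall p, FAxiom (FObl p p)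
| FA_SH : forall p q r,
    FAxiom (FImp (FObl p (PAnd q r)) (FObl (PImp r p) q))
| FA_Dstar : forall p q,
    FAxiom (FImp (FDia q) (FImp (FObl p q) (FNeg (FObl (PNeg p) q)))).

Fixpoint trans (a : FF) : LF :=
  match a with
  | FBot => LBot
  | FVar n => LVar n
  | FBox p => LCond (PNeg p) PBot
  | FDia p => LNeg (LCond p PBot)
  | FObl q p => LCond p q
  | FAnd x y => LAnd (trans x) (trans y)
  | FOr x y => LOr (trans x) (trans y)
  | FImp x y => LImp (trans x) (trans y)
  | FIff x y => LIff (trans x) (trans y)
  | FNeg x => LNeg (trans x)
  end.

From Stdlib Require Import List Bool.
Import ListNotations.

(* Under the translation, Box p is the conditional ~p ~> False.  Axiom T is
   then ST applied to ~p; necessitation and K come from S5_F, whose premise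
   is a propositional consequence of literals that are available (ID, resp.
   the boxes themselves through T); COK and D* are instances of RCK; Ext is
   LL+; and Nec follows from Ext, since Box p makes q /\ p and q equivalent,
   while (q /\ p) ~> p holds by ID and RCK. *)

Ltac solve_taut :=
  unfold LTaut; intros; simpl;
  repeat match goal with
  | |- context [Leval ?v ?c ?bv ?x] => destruct (Leval v c bv x)
  | |- context [?c ?p ?q] =>
      match type of c with PF -> PF -> bool => destruct (c p q) end
  end; reflexivity.

Lemma Sup_taut_mp a b : Sup a -> LTaut (LImp a b) -> Sup b.
Proof. intros Ha Hab. exact (Sup_mp a b Ha (Sup_taut _ Hab)). Qed.

Lemma Sup_taut_mp2 a b c : Sup a -> Sup b -> LTaut (LImp a (LImp b c)) -> Sup c.
Proof.
  intros Ha Hb Habc.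
  exact (Sup_mp b c Hb (Sup_mp a _ Ha (Sup_taut _ Habc))).
Qed.

Lemma Leval_trans v c bv a :
  Leval v c bv (trans a) =
  Feval v (fun p => c (PNeg p) PBot) (fun p => negb (c p PBot)) (fun q p => c p q) a.
Proof. induction a; simpl; congruence. Qed.

Lemma LTaut_trans a : FTaut a -> LTaut (trans a).
Proof. intros Ha v c bv. rewrite Leval_trans. apply Ha. Qed.

Lemma trans_embF p : trans (embF p) = emb p.
Proof. induction p; simpl; congruence. Qed.

Definition LBox (p : PF) : LF := LCond (PNeg p) PBot.

Lemma Sup_box_T p : Sup (LImp (LBox p) (emb p)).
Proof. eapply Sup_taut_mp; [apply (Sup_ST (PNeg p)) | solve_taut]. Qed.

Lemma Sup_box_nec p : Sup (emb p) -> Sup (LBox p).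
Proof.
  intro Hp.
  assert (Hlit : Sup (LImp (LCond p p) (emb p))).
  { eapply Sup_taut_mp; [exact Hp | solve_taut]. }
  exact (Sup_mp _ _ (Sup_ID p) (Sup_S5F (true, p, p) [] p Hlit)).
Qed.

Lemma Sup_box_K p q : Sup (LImp (LBox (PImp p q)) (LImp (LBox p) (LBox q))).
Proof.
  assert (Hq : Sup (LImp (LAnd (LBox (PImp p q)) (LBox p)) (emb q))).
  { eapply Sup_taut_mp2;
      [apply (Sup_box_T (PImp p q)) | apply (Sup_box_T p) | solve_taut]. }
  eapply Sup_taut_mp; [exact (Sup_S5F (true, PNeg (PImp p q), PBot)
                                       [(true, PNeg p, PBot)] q Hq) | solve_taut].
Qed.

Lemma Sup_cond_mono q p r :
  Sup (emb (PImp p r)) -> Sup (LImp (LCond q p) (LCond q r)).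
Proof. exact (Sup_RCK q p [] r). Qed.

Lemma Sup_cond_K p q r :
  Sup (LImp (LCond p (PImp q r)) (LImp (LCond p q) (LCond p r))).
Proof.
  assert (H : Sup (LImp (LAnd (LCond p (PImp q r)) (LCond p q)) (LCond p r))).
  { apply (Sup_RCK p (PImp q r) [q] r), Sup_taut; solve_taut. }
  eapply Sup_taut_mp; [exact H | solve_taut].
Qed.

Lemma Sup_cond_of_box p q : Sup (LImp (LBox p) (LCond q p)).
Proof.
  assert (Hequiv : Sup (LImp (LBox p) (LBox (PIff (PAnd q p) q)))).
  { apply (Sup_S5F (true, PNeg p, PBot) []).
    eapply Sup_taut_mp; [apply (Sup_box_T p) | solve_taut]. }
  assert (Hqp : Sup (LCond (PAnd q p) p)).
  { apply (Sup_mp _ _ (Sup_ID (PAnd q p))), Sup_cond_mono, Sup_taut; solve_taut. }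
  assert (Hll : Sup (LImp (LBox p) (LIff (LCond (PAnd q p) p) (LCond q p)))).
  { eapply Sup_taut_mp2; [exact Hequiv | exact (Sup_LLplus (PAnd q p) q p) | solve_taut]. }
  eapply Sup_taut_mp2; [exact Hqp | exact Hll | solve_taut].
Qed.

Lemma Sup_cond_D p q :
  Sup (LImp (LNeg (LCond q PBot)) (LImp (LCond q p) (LNeg (LCond q (PNeg p))))).
Proof.
  assert (H : Sup (LImp (LAnd (LCond q p) (LCond q (PNeg p))) (LCond q PBot))).
  { apply (Sup_RCK q p [PNeg p] PBot), Sup_taut; solve_taut. }
  eapply Sup_taut_mp; [exact H | solve_taut].
Qed.

Lemma Sup_trans_FAxiom a : FAxiom a -> Sup (trans a).
Proof.
  destruct 1; simpl.
  - exact (Sup_taut _ (LTaut_trans a H)).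
  - apply Sup_box_K.
  - rewrite trans_embF. apply Sup_box_T.
  - apply Sup_cond_K.
  - apply Sup_cond_of_box.
  - apply Sup_LLplus.
  - apply Sup_ID.
  - apply Sup_SH.
  - apply Sup_cond_D.
Qed.

Theorem theorem2 :
  (forall a : FF, FAxiom a -> Sup (trans a)) /\
  (forall a b : FF, Sup (trans a) -> Sup (trans (FImp a b)) -> Sup (trans b)) /\
  (forall p : PF, Sup (emb p) -> Sup (LCond (PNeg p) PBot)).
Proof.
  split; [exact Sup_trans_FAxiom | split].
  - intros a b. apply Sup_mp.
  - exact Sup_box_nec.
Qed.
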